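(* Let $G$ be a finite simple graph with ${\rm diam}(G)=k$, and let $e$ be an edge of $G$ such that ${\rm diam}(G-e) > k$. Let $u, v$ be two vertices of $G$ with $d_{G-e}(u,v)>k$. If there exists a $\chi_\rho(G)$-packing coloring $c$ of $G$ such that $c(v)>c(u) \geq k$, then $\chi_\rho(G-e) < \chi_\rho(G)$.
   Context: A $k$-packing coloring of a graph $G$ is a map $c:V(G)\to\{1,\ldots,k\}$ such that two distinct vertices $u,v$ with $c(u)=c(v)=i$ satisfy $d_G(u,v)>i$ (distance between vertices in different components is infinite). The packing chromatic number $\chi_\rho(G)$ is the smallest $k$ for which $G$ admits a $k$-packing coloring. ${\rm diam}$ denotes the diameter (maximum distance between two vertices, infinite if disconnected); $G-e$ is $G$ with the edge $e$ deleted. *)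

From mathcomp Require Import all_boot.
Set Implicit Arguments. Unset Strict Implicit. Unset Printing Implicit Defensive.

(* A finite simple graph: vertex set a finType T, adjacency G : rel T,
   symmetric and irreflexive (hypotheses stated in the theorem). *)

(* reach G n x y  <=>  d_G(x,y) <= n  (there is a walk of length <= n). *)
Fixpoint reach (T : finType) (G : rel T) (n : nat) (x y : T) : bool :=
  match n with
  | 0 => x == y
  | n'.+1 => reach G n' x y || [exists z, reach G n' x z && G z y]
  end.

Definition del_edge (T : finType) (G : rel T) (a b : T) : rel T :=
  fun x y => G x y && ~~ (((x == a) && (y == b)) || ((x == b) && (y == a))).

Definition diam_eq (T : finType) (G : rel T) (k : nat) : Prop :=
  (forall x y, reach G k x y) /\
  (forall k', (forall x y, reach G k' x y) -> k <= k').

Definition packing_coloring (T : finType) (G : rel T) (k : nat) (c : T -> nat) : Prop :=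
  (forall x, 1 <= c x <= k) /\
  (forall x y, x != y -> c x = c y -> ~~ reach G (c x) x y).

Definition has_packing (T : finType) (G : rel T) : pred nat :=
  fun k => [exists c : {ffun T -> 'I_k.+1},
              [forall x, 0 < c x] &&
              [forall x, forall y,
                 ((x != y) && (c x == c y :> nat)) ==> ~~ reach G (c x) x y]].

Lemma has_packing_exists (T : finType) (G : rel T) : exists k, has_packing G k.
Proof.
exists #|T|; apply/existsP.
exists [ffun x => inord (enum_rank x).+1 : 'I_#|T|.+1].
apply/andP; split.
  by apply/forallP=> x; rewrite ffunE inordK // ltnS ltn_ord.
apply/forallP=> x; apply/forallP=> y; apply/implyP=> /andP [nxy].
rewrite !ffunE !inordK ?ltnS ?ltn_ord // eqSS => /eqP /ord_inj /enum_rank_inj exy.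
by rewrite exy eqxx in nxy.
Qed.

Definition chi_rho (T : finType) (G : rel T) : nat :=
  ex_minn (has_packing_exists G).

(* Every distance of G is at most k, so in a packing coloring the colors
   >= k are used at most once each.  Recolor: keep the colors < k, give the
   color k to both u and v (allowed in G - e, where they are at distance
   > k), and squeeze the other colors >= k, which avoid c u and c v, into
   the k+1, ..., chi_rho(G)-1 left over.  Deleting an edge only increases
   distances, so the small colors stay valid.  Only diam(G) <= k is used. *)

From mathcomp Require Import all_boot.
From mathcomp Require Import zify.

Set Implicit Arguments.
Unset Strict Implicit.
Unset Printing Implicit Defensive.

Section Reach.
Variables (T : finType) (G : rel T).

Lemma reach_refl n x : reach G n x x.
Proof. by elim: n => [|n IHn] /=; rewrite ?eqxx ?IHn. Qed.

Lemma reach_leq n n' x y : n <= n' -> reach G n x y -> reach G n' x y.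
Proof.
elim: n' => [|n' IHn']; first by rewrite leqn0 => /eqP ->.
rewrite leq_eqVlt => /orP [/eqP -> // | /IHn' le_n' /le_n' r]; by rewrite /= r.
Qed.

Lemma reach_cons n x z y : G x z -> reach G n z y -> reach G n.+1 x y.
Proof.
move=> Gxz; elim: n y => [|n IHn] y /=.
  by move=> /eqP <-; apply/orP; right; apply/existsP; exists x; rewrite eqxx.
case/orP => [/IHn r | /existsP [w /andP [/IHn r Gwy]]].
  exact: reach_leq (leqnSn _) r.
by apply/orP; right; apply/existsP; exists w; apply/andP.
Qed.

Lemma reach_sym n x y : symmetric G -> reach G n x y -> reach G n y x.
Proof.
move=> G_sym; elim: n x y => [|n IHn] x y /=; first by rewrite eq_sym.
case/orP => [/IHn -> // | /existsP [z /andP [/IHn r Gzy]]].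
by apply: reach_cons r; rewrite G_sym.
Qed.

End Reach.

Lemma sub_reach (T : finType) (G H : rel T) n x y :
  subrel H G -> reach H n x y -> reach G n x y.
Proof.
move=> HG; elim: n y => [|n IHn] y //=.
case/orP => [/IHn -> // | /existsP [z /andP [/IHn r /HG Gzy]]].
by apply/orP; right; apply/existsP; exists z; rewrite r.
Qed.

Lemma del_edge_sub (T : finType) (G : rel T) a b : subrel (del_edge G a b) G.
Proof. by move=> x y /andP []. Qed.

Lemma del_edge_sym (T : finType) (G : rel T) a b :
  symmetric G -> symmetric (del_edge G a b).
Proof.
move=> G_sym x y; rewrite /del_edge G_sym; congr (_ && ~~ _).
by rewrite orbC andbC [(y == b) && _]andbC.
Qed.

Lemma packing_inj_ge (T : finType) (G : rel T) k m c x y :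
  (forall x y, reach G k x y) -> packing_coloring G m c ->
  k <= c x -> c x = c y -> x = y.
Proof.
move=> G_reach [_ Hc] kx cxy; apply/eqP.
by apply: contraTT (reach_leq kx (G_reach x y)) => nxy; exact: Hc.
Qed.

Lemma chi_rho_le (T : finType) (G : rel T) n c :
  packing_coloring G n c -> chi_rho G <= n.
Proof.
move=> [c_range Hc].
have c_ord x : c x < n.+1 by case/andP: (c_range x).
suff : has_packing G n by rewrite /chi_rho; case: ex_minnP => m _; apply.
apply/existsP; exists [ffun x => inord (c x)]; apply/andP; split.
  by apply/forallP => x; rewrite ffunE inordK //; case/andP: (c_range x).
apply/forallP => x; apply/forallP => y; apply/implyP => /andP [nxy].
by rewrite !ffunE !inordK // => /eqP; exact: Hc.
Qed.

Definition squeeze (p q i : nat) : nat :=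
  if i < p then i.+1 else if i < q then i else i.-1.

Section Squeeze.
Variables (p q : nat).
Hypothesis lt_pq : p < q.

Lemma squeeze_inj i j : i != p -> i != q -> j != p -> j != q ->
  squeeze p q i = squeeze p q j -> i = j.
Proof. by rewrite /squeeze; repeat case: ifP; lia. Qed.

Lemma squeeze_gt k i : k <= p -> k <= i -> i != p -> i != q ->
  k < squeeze p q i.
Proof. by rewrite /squeeze; repeat case: ifP; lia. Qed.

Lemma squeeze_lt m i : q <= m -> i <= m -> squeeze p q i < m.
Proof. by rewrite /squeeze; repeat case: ifP; lia. Qed.

End Squeeze.

Definition recolor (T : finType) (k : nat) (c : T -> nat) (u v : T) (x : T) :=
  if c x < k then c x
  else if (x == u) || (x == v) then k
  else squeeze (c u) (c v) (c x).

Section Recoloring.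
Variables (T : finType) (G H : rel T) (k m : nat) (c : T -> nat) (u v : T).
Hypotheses (G_reach : forall x y, reach G k x y) (Hc : packing_coloring G m c).
Hypotheses (HG : subrel H G) (H_sym : symmetric H).
Hypotheses (k_cuv : k <= c u < c v) (Huv : ~~ reach H k u v).

Local Notation c' := (recolor k c u v).

Lemma c_eq_ge x y : k <= c x -> (c x == c y) = (x == y).
Proof.
by move=> kx; apply/eqP/eqP => [/(packing_inj_ge G_reach Hc kx) | ->].
Qed.

Lemma recolor_small x : c x < k -> c' x = c x.
Proof. by rewrite /recolor => ->. Qed.

Lemma recolor_large x : k <= c x ->
  c' x = if (x == u) || (x == v) then k else squeeze (c u) (c v) (c x).
Proof. by rewrite /recolor ltnNge => ->. Qed.

Lemma recolor_gtk x : k <= c x -> x != u -> x != v -> k < c' x.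
Proof.
move=> kx xu xv; rewrite recolor_large // (negbTE xu) (negbTE xv).
by apply: squeeze_gt; rewrite ?c_eq_ge //; case/andP: k_cuv.
Qed.

Lemma recolor_ltk x : (c' x < k) = (c x < k).
Proof.
case: (ltnP (c x) k) => [lt | kx]; first by rewrite recolor_small.
apply/negbTE; rewrite -leqNgt.
case: (boolP ((x == u) || (x == v))) => [xuv | ]; first by rewrite recolor_large ?xuv.
by rewrite negb_or => /andP [xu xv]; exact/ltnW/(recolor_gtk kx).
Qed.

Lemma recolor_eqk x : k <= c x -> (c' x == k) = (x == u) || (x == v).
Proof.
move=> kx; case: (boolP ((x == u) || (x == v))) => [xuv | ].
  by rewrite recolor_large // xuv eqxx.
by rewrite negb_or => /andP [xu xv]; rewrite gtn_eqF // recolor_gtk.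
Qed.

Lemma recolor_inj_gtk x y : k < c' x -> c' x = c' y -> x = y.
Proof.
move=> kx exy; have ky : k < c' y by rewrite -exy.
have c_ge z : k < c' z -> k <= c z by move=> kz; rewrite leqNgt -recolor_ltk -leqNgt ltnW.
have not_uv z : k < c' z -> (z != u) && (z != v).
  by move=> kz; rewrite -negb_or -recolor_eqk ?c_ge ?gtn_eqF.
case/andP: (not_uv x kx) => xu xv; case/andP: (not_uv y ky) => yu yv.
have [_ cu_cv] : k <= c u /\ c u < c v by apply/andP.
move: exy; rewrite !recolor_large ?c_ge // (negbTE xu) (negbTE xv) (negbTE yu) (negbTE yv).
move/(squeeze_inj cu_cv); rewrite !c_eq_ge ?c_ge // => /(_ xu xv yu yv).
exact: packing_inj_ge G_reach Hc (c_ge x kx).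
Qed.

Lemma recolor_range x : 0 < c' x <= m.-1.
Proof.
have [ku cu_cv] : k <= c u /\ c u < c v by apply/andP.
have cv_m : c v <= m by case/andP: (Hc.1 v).
have k_gt0 : 0 < k.
  rewrite lt0n; apply: contraNneq Huv => k0.
  by move: (G_reach u v); rewrite k0 => /eqP <-; exact: reach_refl.
case: (ltnP (c x) k) => [lt | kx].
  by rewrite recolor_small //; have := Hc.1 x; lia.
case: (boolP ((x == u) || (x == v))) => [xuv | ].
  by rewrite recolor_large // xuv; lia.
rewrite negb_or => /andP [xu xv]; have := recolor_gtk kx xu xv.
rewrite recolor_large // (negbTE xu) (negbTE xv) /=.
have : squeeze (c u) (c v) (c x) < m by apply: squeeze_lt; case/andP: (Hc.1 x).
lia.
Qed.

Lemma recolor_packing : packing_coloring H m.-1 c'.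
Proof.
split; first exact: recolor_range.
move=> x y nxy exy.
have [small | kx] := ltnP (c' x) k.
  have cx : c x < k by rewrite -recolor_ltk.
  have cy : c y < k by rewrite -recolor_ltk -exy.
  rewrite recolor_small //; move: exy; rewrite !recolor_small // => exy.
  exact: contra (sub_reach HG) (Hc.2 x y nxy exy).
have cx : k <= c x by rewrite leqNgt -recolor_ltk -leqNgt.
have cy : k <= c y by rewrite leqNgt -recolor_ltk -leqNgt -exy.
move: kx; rewrite leq_eqVlt => /orP [/eqP kx | ]; last first.
  by move/recolor_inj_gtk/(_ exy)/eqP; rewrite (negbTE nxy).
have := recolor_eqk cx; have := recolor_eqk cy.
rewrite -exy -kx eqxx => /esym yuv /esym xuv; move: nxy.
case/orP: xuv => /eqP ->; case/orP: yuv => /eqP ->; rewrite ?eqxx // => _.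
exact: contra (reach_sym H_sym) Huv.
Qed.

End Recoloring.

Theorem lemma2p3 (T : finType) (G : rel T)
  (G_sym : symmetric G) (G_irr : irreflexive G)
  (k : nat) (a b : T) (Gab : G a b)
  (diamG : diam_eq G k)
  (diamGe : exists x y, ~~ reach (del_edge G a b) k x y)
  (u v : T) (duv : ~~ reach (del_edge G a b) k u v)
  (c : T -> nat) (Hc : packing_coloring G (chi_rho G) c)
  (Hcuv : k <= c u < c v) :
  chi_rho (del_edge G a b) < chi_rho G.
Proof.
have recolored := recolor_packing diamG.1 Hc (@del_edge_sub _ G a b)
  (del_edge_sym a b G_sym) Hcuv duv.
have chi_gt0 : 0 < chi_rho G.
  by have := Hc.1 v; move: Hcuv; lia.
by rewrite (leq_ltn_trans (chi_rho_le recolored)) // prednK.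
Qed.
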